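(* Let $\sigma$ be any position of the parallel chip-firing game on $K_{a,b}$ ($a,b\ge1$). If $p(\sigma)$ is odd then $p(\sigma)\le\min(a,b)$, and if $p(\sigma)$ is even then $p(\sigma)\le 2\min(a,b)$.
   Context: Parallel chip-firing game: a position $\sigma$ assigns a nonnegative integer to each vertex; in each step every vertex $v$ with $\sigma(v)\ge\deg(v)$ simultaneously sends one chip to each neighbor. $K_{a,b}$ is the complete bipartite graph with sides of sizes $a$ and $b$. The period $p(\sigma)$ is the least positive integer $p$ such that $U^{t+p}\sigma=U^t\sigma$ for all sufficiently large $t$, where $U$ is the step operator. *)

From mathcomp Require Import all_boot.
Set Implicit Arguments. Unset Strict Implicit. Unset Printing Implicit Defensive.

Definition Kvert (a b : nat) : finType := ('I_a + 'I_b)%type.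

Definition Kadj (a b : nat) (u v : Kvert a b) : bool :=
  match u, v with
  | inl _, inr _ => true
  | inr _, inl _ => true
  | _, _ => false
  end.

Definition Kdeg (a b : nat) (v : Kvert a b) : nat :=
  #|[pred u | Kadj v u]|.

Definition position (a b : nat) := Kvert a b -> nat.

Definition fires (a b : nat) (s : position a b) (v : Kvert a b) : bool :=
  Kdeg v <= s v.

Definition step (a b : nat) (s : position a b) : position a b :=
  fun v => s v - (if fires s v then Kdeg v else 0)
           + #|[pred u | Kadj u v && fires s u]|.

Definition Uiter (a b : nat) (t : nat) (s : position a b) : position a b :=
  iter t (@step a b) s.

Definition is_eventual_period (a b : nat) (s : position a b) (p : nat) : Prop :=
  0 < p /\ exists T, forall t, T <= t -> Uiter (t + p) s = Uiter t s.

Definition period_of (a b : nat) (s : position a b) (p : nat) : Prop :=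
  is_eventual_period s p /\ forall q, is_eventual_period s q -> p <= q.

From mathcomp Require Import all_boot zify.
From Stdlib Require Import FunctionalExtensionality.
Set Implicit Arguments. Unset Strict Implicit. Unset Printing Implicit Defensive.

(* If the position is periodic and some vertex holds at least twice its degree, that
   vertex fires forever.  A vertex that fires at every step of a periodic orbit can
   only lose chips unless it receives its degree each time, so all its neighbours
   fire forever too; in K_{a,b} this spreads to every vertex and the position is a
   fixed point.  Otherwise every vertex stays below twice its degree, and a left
   vertex that has received c chips has then fired exactly floor ((s v + c) / b)
   times.  Hence the cumulative firing counts of the two sides drive each other
   through monotone maps f, g with f (x + b) = f x + a and g (y + a) = g y + b:
   g \o f lifts a degree-one map of the circle Z/bZ.  Its orbits become periodic
   with a common period m <= b (pigeonhole on residues, plus uniqueness of the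
   rotation number), so 2m <= 2b is an eventual period of the game, and likewise
   some 2m' <= 2a.  The period divides both. *)

Lemma leq_of_forall_mul_leq x y c : (forall R, R * x <= R * y + c) -> x <= y.
Proof. by move=> /(_ c.+1); nia. Qed.

Lemma divn_lt_double x d : x < 2 * d -> x %/ d = (d <= x).
Proof. by move=> hx; case: (leqP d x) => h /=; [nia | rewrite divn_small]. Qed.

Lemma translate_mul (f : nat -> nat) d e : (forall x, f (x + d) = f x + e) ->
  forall k x, f (x + k * d) = f x + k * e.
Proof.
move=> f_add; elim=> [|k IH] x; first by rewrite !mul0n !addn0.
by rewrite !mulSn addnA IH f_add addnA.
Qed.

Section MonotoneDegreeOneMaps.

Variables (n : nat) (h : nat -> nat).
Hypothesis n_gt0 : 0 < n.
Hypothesis h_homo : {homo h : x y / x <= y}.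
Hypothesis h_addn : forall x, h (x + n) = h x + n.

Lemma iter_homo r : {homo iter r h : x y / x <= y}.
Proof. by elim: r => [|r IH] x y //= /IH /h_homo. Qed.

Lemma iter_addn_mul r k x : iter r h (x + k * n) = iter r h x + k * n.
Proof. by elim: r => [|r IH] //=; rewrite IH (translate_mul h_addn). Qed.

(* [h] is a lift of a degree-one circle map on [Z/nZ]; [x] lies on a periodic
   orbit of period [m] that winds [J] times around the circle. *)
Definition periodic_pt m J x := iter m h x = x + J * n.

Lemma periodic_ptM m J x r : periodic_pt m J x -> periodic_pt (r * m) (r * J) x.
Proof.
rewrite /periodic_pt => px; elim: r => [|r IH]; first by rewrite !mul0n addn0.
by rewrite mulSn iterD IH iter_addn_mul px mulSn mulnDl addnA.
Qed.

Lemma periodic_pt_iter m J x r : periodic_pt m J x -> periodic_pt m J (iter r h x).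
Proof. by move=> px; rewrite /periodic_pt -iterD addnC iterD px iter_addn_mul. Qed.

Lemma periodic_pt_rotation_leq m m' J J' x y :
  periodic_pt m J x -> periodic_pt m' J' y -> J * m' <= J' * m.
Proof.
move=> px py; rewrite -(leq_pmul2r n_gt0).
apply: (@leq_of_forall_mul_leq _ _ (y + x * n)) => R.
have x_le : x <= y + x * n by nia.
have := iter_homo (R * m' * m) x_le.
rewrite iter_addn_mul (periodic_ptM (R * m') px) [R * m' * m]mulnAC.
rewrite (periodic_ptM (R * m) py).
nia.
Qed.

Lemma iter_rotation_lower m J x k : x + J * n <= iter m h x ->
  iter m h x + k * (J * n) <= iter (k.+1 * m) h x.
Proof.
move=> le; elim: k => [|k IH]; first by rewrite mul0n addn0 mul1n.
have := iter_homo m IH; have := iter_homo m le.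
rewrite mulnA !iter_addn_mul [k.+2 * m]mulSn iterD; nia.
Qed.

Lemma iter_rotation_upper m J x k : iter m h x <= x + J * n ->
  iter (k.+1 * m) h x <= iter m h x + k * (J * n).
Proof.
move=> le; elim: k => [|k IH]; first by rewrite mul0n addn0 mul1n.
have := iter_homo m IH; have := iter_homo m le.
rewrite mulnA !iter_addn_mul [k.+2 * m]mulSn iterD; nia.
Qed.

Lemma periodic_pt_rotation m m' J J' y : 0 < m' -> J * m' = J' * m ->
  periodic_pt m' J' y -> periodic_pt m J y.
Proof.
case: m' => // k _ eJ py.
have ey : iter (k.+1 * m) h y = y + k.+1 * (J * n).
  by rewrite mulnC (periodic_ptM m py); nia.
apply/eqP; rewrite eqn_leq; apply/andP; split; rewrite leqNgt; apply/negP => lt.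
- by have := iter_rotation_lower k (ltnW lt); rewrite ey; lia.
- by have := iter_rotation_upper k (ltnW lt); rewrite ey; lia.
Qed.

Lemma exists_periodic_pt x0 : (forall k, iter k h x0 <= iter k.+1 h x0) ->
  exists i m J, 0 < m <= n /\ periodic_pt m J (iter i h x0).
Proof.
move=> orbit_inc.
pose res (i : 'I_n.+1) : 'I_n := Ordinal (ltn_pmod (iter i h x0) n_gt0).
have : ~~ injectiveb res by apply/injectiveP => /leq_card; rewrite !card_ord ltnn.
case/injectivePn => i [j] neq_ij eq_res.
wlog lt_ij : i j neq_ij eq_res / i < j.
  move=> gen; case: (ltngtP i j) => [|lt_ji|/val_inj eq_ij]; first exact: gen.
    by apply: (gen j i); rewrite // eq_sym.
  by rewrite eq_ij eqxx in neq_ij.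
have le_orbit := homo_leq leqnn leq_trans orbit_inc (ltnW lt_ij).
have eq_mod : iter i h x0 = iter j h x0 %[mod n] by move/(congr1 val): eq_res.
exists i, (j - i), ((iter j h x0 - iter i h x0) %/ n); split.
  by rewrite subn_gt0 lt_ij /=; have := ltn_ord j; lia.
rewrite /periodic_pt -iterD subnK ?(ltnW lt_ij) // divnK ?subnKC //.
by rewrite -eqn_mod_dvd // eq_mod.
Qed.

Theorem common_periodic_pt x0 y0 :
  (forall k, iter k h x0 <= iter k.+1 h x0) ->
  (forall k, iter k h y0 <= iter k.+1 h y0) ->
  exists m J N, 0 < m <= n /\ forall k, N <= k ->
    periodic_pt m J (iter k h x0) /\ periodic_pt m J (iter k h y0).
Proof.
move=> /exists_periodic_pt [i [m [J [/andP [m_gt0 m_le] px]]]].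
move=> /exists_periodic_pt [i' [m' [J' [/andP [m'_gt0 _] py]]]].
have eJ : J * m' = J' * m.
  apply/eqP; rewrite eqn_leq (periodic_pt_rotation_leq px py).
  exact: (periodic_pt_rotation_leq py px).
have {}py := periodic_pt_rotation m'_gt0 eJ py.
exists m, J, (maxn i i'); rewrite m_gt0 m_le; split => // k.
rewrite geq_max => /andP [ik i'k]; split.
- by rewrite -(subnK ik) iterD; apply: periodic_pt_iter.
- by rewrite -(subnK i'k) iterD; apply: periodic_pt_iter.
Qed.

End MonotoneDegreeOneMaps.

(* Even and odd times give two orbits of the lift [g \o f] of a degree-one map of
   [Z/bZ]; they eventually share a period. *)
Lemma alternating_sums_periodic a b (f g C D : nat -> nat) : 0 < b ->
  {homo f : x y / x <= y} -> {homo g : x y / x <= y} ->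
  (forall x, f (x + b) = f x + a) -> (forall y, g (y + a) = g y + b) ->
  (forall t, C t.+1 = g (D t)) -> (forall t, D t.+1 = f (C t)) ->
  (forall t, C t <= C t.+1) ->
  exists m J N, 0 < m <= b /\ forall t, N <= t ->
    C (t + 2 * m) = C t + J * b /\ D (t + 2 * m) = D t + J * a.
Proof.
move=> b_gt0 f_homo g_homo f_add g_add C_next D_next C_inc.
pose h := g \o f.
have h_homo : {homo h : x y / x <= y} by move=> x y /f_homo /g_homo.
have h_add x : h (x + b) = h x + b by rewrite /h /= f_add g_add.
have C_iter r k : C (2 * k + r) = iter k h (C r).
  elim: k => [|k IH]; first by rewrite muln0.
  by rewrite iterS -IH mulnS -addnA !addSn add0n C_next D_next.
have C_homo := homo_leq leqnn leq_trans C_inc.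
have orbit_inc r k : iter k h (C r) <= iter k.+1 h (C r).
  by rewrite -!C_iter; apply: C_homo; lia.
have [m [J [N [m_le per]]]] :=
  common_periodic_pt b_gt0 h_homo h_add (orbit_inc 0) (orbit_inc 1).
have C_per t : 2 * N <= t -> C (t + 2 * m) = C t + J * b.
  move=> le_t; have t_eq : t = 2 * t./2 + odd t by rewrite mul2n addnC odd_double_half.
  have le_half : N <= t./2 by have := leq_b1 (odd t); lia.
  rewrite t_eq (_ : _ + 2 * m = 2 * (m + t./2) + odd t); last by lia.
  rewrite !C_iter iterD.
  by case: (odd t); [exact: (per _ le_half).2 | exact: (per _ le_half).1].
exists m, J, (2 * N).+1; split => // t le_t; split; first by apply: C_per; lia.
case: t le_t => // t le_t.
by rewrite addSn !D_next C_per ?(translate_mul f_add) //; lia.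
Qed.

Section Pile.

(* A single vertex of degree [d]: [x t] chips at time [t], [r t] chips received at
   step [t]. *)
Variables (d : nat) (r x : nat -> nat).
Hypothesis r_le : forall t, r t <= d.
Hypothesis x_next : forall t, x t.+1 = x t - (if d <= x t then d else 0) + r t.
Hypothesis x0_lt : x 0 < 2 * d.

Lemma pile_lt t : x t < 2 * d.
Proof.
elim: t => // t IH; rewrite x_next; have := r_le t.
by case: (leqP d (x t)) => fire; lia.
Qed.

Lemma pile_balance t : x t + d * \sum_(k < t) (d <= x k) = x 0 + \sum_(k < t) r k.
Proof.
elim: t => [|t IH]; first by rewrite !big_ord0 muln0 !addn0.
rewrite !big_ord_recr /= x_next mulnDr; have := r_le t.
move: IH; set F := \sum_(k < t) _; set S := \sum_(k < t) _.
by case: (leqP d (x t)) => fire /=; lia.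
Qed.

Lemma pile_firings t : \sum_(k < t.+1) (d <= x k) = (x 0 + \sum_(k < t) r k) %/ d.
Proof.
have d_gt0 : 0 < d by lia.
rewrite -pile_balance addnC mulnC divnMDl // divn_lt_double ?pile_lt //.
by rewrite big_ord_recr.
Qed.

Lemma pile_shift t t' J :
  \sum_(k < t') r k = \sum_(k < t) r k + J * d ->
  \sum_(k < t'.+1) r k = \sum_(k < t.+1) r k + J * d ->
  x t'.+1 = x t.+1.
Proof.
have d_gt0 : 0 < d by lia.
move=> eS eS1; have := pile_balance t.+1; have := pile_balance t'.+1.
rewrite !pile_firings eS eS1 addnA divnDMl // mulnDr.
set q := _ %/ d; lia.
Qed.

End Pile.

Section ChipFiring.

Variables a b : nat.

Definition inflow (s : position a b) (v : Kvert a b) :=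
  #|[pred u | Kadj u v && fires s u]|.

Lemma stepE s v : step s v = s v - (if fires s v then Kdeg v else 0) + inflow s v.
Proof. by []. Qed.

Lemma Kadj_sym (u v : Kvert a b) : Kadj u v = Kadj v u.
Proof. by case: u; case: v. Qed.

Lemma card_pred_Kvert (P : pred (Kvert a b)) :
  #|P| = \sum_(i < a) P (inl i) + \sum_(j < b) P (inr j).
Proof.
rewrite -sum1_card big_mkcond big_sumType /=.
by congr (_ + _); apply: eq_bigr => i _; rewrite unfold_in; case: (P _).
Qed.

Lemma Kdeg_inl i : Kdeg (inl i : Kvert a b) = b.
Proof. by rewrite /Kdeg card_pred_Kvert big1 // sum_nat_const card_ord muln1. Qed.

Lemma Kdeg_inr j : Kdeg (inr j : Kvert a b) = a.
Proof.
by rewrite /Kdeg card_pred_Kvert [X in _ + X]big1 // sum_nat_const card_ord muln1 addn0.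
Qed.

Lemma inflow_inl s i : inflow s (inl i) = \sum_(j < b) (a <= s (inr j)).
Proof.
rewrite /inflow card_pred_Kvert big1 //= add0n.
by apply: eq_bigr => j _; rewrite /fires Kdeg_inr.
Qed.

Lemma inflow_inr s j : inflow s (inr j) = \sum_(i < a) (b <= s (inl i)).
Proof.
rewrite /inflow card_pred_Kvert [X in _ + X]big1 //= addn0.
by apply: eq_bigr => i _; rewrite /fires Kdeg_inl.
Qed.

Lemma inflow_le s v : inflow s v <= Kdeg v.
Proof.
by apply: subset_leq_card; apply/subsetP => u; rewrite !inE Kadj_sym => /andP [].
Qed.

Lemma inflow_fullP s v :
  reflect (forall u, Kadj v u -> fires s u) (inflow s v == Kdeg v).
Proof.
have sub : [pred u | Kadj u v && fires s u] \subset [pred u | Kadj v u].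
  by apply/subsetP => u; rewrite !inE Kadj_sym => /andP [].
apply: (iffP eqP) => [/subset_cardP/(_ sub) eq_nbrs u vu | all_fire].
  by have := eq_nbrs u; rewrite !inE Kadj_sym vu.
by apply: eq_card => u; rewrite !inE Kadj_sym; case vu: (Kadj v u) => //=; exact: all_fire.
Qed.

Lemma Uiter_lt_double (s : position a b) v k : s v < 2 * Kdeg v -> Uiter k s v < 2 * Kdeg v.
Proof.
move=> lt.
apply: (@pile_lt _ (fun t => inflow (Uiter t s) v) (fun t => Uiter t s v)) => // n.
exact: inflow_le.
Qed.

Lemma Uiter_firings (s : position a b) v t : s v < 2 * Kdeg v ->
  \sum_(k < t.+1) (Kdeg v <= Uiter k s v) =
  (s v + \sum_(k < t) inflow (Uiter k s) v) %/ Kdeg v.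
Proof.
move=> lt.
apply: (@pile_firings _ (fun t => inflow (Uiter t s) v) (fun t => Uiter t s v)) => // n.
exact: inflow_le.
Qed.

Lemma Uiter_shift (s : position a b) v t t' J : s v < 2 * Kdeg v ->
  \sum_(k < t') inflow (Uiter k s) v =
    \sum_(k < t) inflow (Uiter k s) v + J * Kdeg v ->
  \sum_(k < t'.+1) inflow (Uiter k s) v =
    \sum_(k < t.+1) inflow (Uiter k s) v + J * Kdeg v ->
  Uiter t'.+1 s v = Uiter t.+1 s v.
Proof.
move=> lt.
apply: (@pile_shift _ (fun t => inflow (Uiter t s) v) (fun t => Uiter t s v)) => // n.
exact: inflow_le.
Qed.

End ChipFiring.

Section Underloaded.

Variables (a b : nat) (s : position a b).
Hypothesis s_under : forall v, s v < 2 * Kdeg v.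

Let recv_l t := \sum_(k < t) \sum_(j < b) (a <= Uiter k s (inr j)).
Let recv_r t := \sum_(k < t) \sum_(i < a) (b <= Uiter k s (inl i)).
Let fired_l x := \sum_(i < a) (s (inl i) + x) %/ b.
Let fired_r y := \sum_(j < b) (s (inr j) + y) %/ a.

Lemma sum_inflow_inl t i : \sum_(k < t) inflow (Uiter k s) (inl i) = recv_l t.
Proof. by apply: eq_bigr => k _; rewrite inflow_inl. Qed.

Lemma sum_inflow_inr t j : \sum_(k < t) inflow (Uiter k s) (inr j) = recv_r t.
Proof. by apply: eq_bigr => k _; rewrite inflow_inr. Qed.

Lemma recv_r_next t : recv_r t.+1 = fired_l (recv_l t).
Proof.
rewrite /recv_r exchange_big; apply: eq_bigr => i _.
by have := Uiter_firings t (s_under (inl i)); rewrite Kdeg_inl sum_inflow_inl.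
Qed.

Lemma recv_l_next t : recv_l t.+1 = fired_r (recv_r t).
Proof.
rewrite /recv_l exchange_big; apply: eq_bigr => j _.
by have := Uiter_firings t (s_under (inr j)); rewrite Kdeg_inr sum_inflow_inr.
Qed.

Lemma underloaded_eventual_period m J N : 0 < m ->
  (forall t, N <= t ->
     recv_l (t + 2 * m) = recv_l t + J * b /\ recv_r (t + 2 * m) = recv_r t + J * a) ->
  is_eventual_period s (2 * m).
Proof.
move=> m_gt0 per; split; first by rewrite muln_gt0.
exists N.+1 => -[|t] // le_t; apply: functional_extensionality => v.
have [el er] := per t le_t; have [el1 er1] := per t.+1 (ltnW le_t).
rewrite addSn; case: v => [i|j]; apply: (Uiter_shift (J := J) (s_under _));
  by rewrite ?sum_inflow_inl ?sum_inflow_inr ?Kdeg_inl ?Kdeg_inr // -addSn.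
Qed.

Lemma underloaded_eventual_periods : 0 < a -> 0 < b ->
  (exists m, 0 < m <= a /\ is_eventual_period s (2 * m)) /\
  (exists m, 0 < m <= b /\ is_eventual_period s (2 * m)).
Proof.
move=> a_gt0 b_gt0.
have fl_homo : {homo fired_l : x y / x <= y}.
  by move=> x y le; apply: leq_sum => i _; rewrite leq_div2r // leq_add2l.
have fr_homo : {homo fired_r : x y / x <= y}.
  by move=> x y le; apply: leq_sum => j _; rewrite leq_div2r // leq_add2l.
have fl_add x : fired_l (x + b) = fired_l x + a.
  transitivity (\sum_(i < a) ((s (inl i) + x) %/ b + 1)).
    by apply: eq_bigr => i _; rewrite addnA divnDr ?dvdnn // divnn b_gt0.
  by rewrite big_split sum_nat_const card_ord muln1.
have fr_add y : fired_r (y + a) = fired_r y + b.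
  transitivity (\sum_(j < b) ((s (inr j) + y) %/ a + 1)).
    by apply: eq_bigr => j _; rewrite addnA divnDr ?dvdnn // divnn a_gt0.
  by rewrite big_split sum_nat_const card_ord muln1.
have recv_l_inc t : recv_l t <= recv_l t.+1 by rewrite /recv_l big_ord_recr leq_addr.
have recv_r_inc t : recv_r t <= recv_r t.+1 by rewrite /recv_r big_ord_recr leq_addr.
have [m [J [N [/andP [m_gt0 m_le] per]]]] :=
  alternating_sums_periodic b_gt0 fl_homo fr_homo fl_add fr_add
    recv_l_next recv_r_next recv_l_inc.
have [m' [J' [N' [/andP [m'_gt0 m'_le] per']]]] :=
  alternating_sums_periodic a_gt0 fr_homo fl_homo fr_add fl_add
    recv_r_next recv_l_next recv_r_inc.
split; [exists m' | exists m]; rewrite ?m_gt0 ?m'_gt0; split => //.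
- by apply: (underloaded_eventual_period (J := J') (N := N')) => // t /per' [].
- exact: (underloaded_eventual_period (J := J) (N := N)).
Qed.

End Underloaded.

Section Overloaded.

Variables (a b p : nat) (s : position a b).
Hypotheses (a_gt0 : 0 < a) (b_gt0 : 0 < b) (p_gt0 : 0 < p).
Hypothesis s_periodic : Uiter p s = s.

Lemma Uiter_addp t : Uiter (t + p) s = Uiter t s.
Proof. by move: s_periodic; rewrite /Uiter iterD => ->. Qed.

Lemma Uiter_mulp k : Uiter (k * p) s = s.
Proof. by rewrite /Uiter iterM; apply: iter_fix; exact: s_periodic. Qed.

(* Once below [2 deg] a vertex stays below forever, but the orbit returns to [s]. *)
Lemma overloaded_fires v : 2 * Kdeg v <= s v -> forall t, fires (Uiter t s) v.
Proof.
move=> over t; rewrite /fires leqNgt; apply/negP => lt_deg.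
have := @Uiter_lt_double _ _ (Uiter t s) v (t * p - t) ltac:(lia).
by rewrite /Uiter -iterD subnK ?leq_pmulr // -/(Uiter _ s) Uiter_mulp ltnNge over.
Qed.

(* While firing, [x] cannot gain chips; periodicity forbids any strict loss. *)
Lemma fires_forever_inflow x : (forall t, fires (Uiter t s) x) ->
  forall t, inflow (Uiter t s) x = Kdeg x.
Proof.
move=> fire t.
have fire_step k : Uiter k.+1 s x = Uiter k s x - Kdeg x + inflow (Uiter k s) x.
  by rewrite /= stepE fire.
have noninc k : Uiter k.+1 s x <= Uiter k s x.
  rewrite fire_step; have := inflow_le (Uiter k s) x.
  by have := fire k; rewrite /fires; lia.
have le_cycle : Uiter (t + p) s x <= Uiter t.+1 s x.
  apply: (homo_leq (f := fun k => Uiter k s x) (r := fun m n => n <= m)) => //.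
    by move=> ? ? ? h1 h2; apply: leq_trans h2 h1.
  by lia.
move: le_cycle; rewrite Uiter_addp fire_step.
by have := inflow_le (Uiter t s) x; have := fire t; rewrite /fires; lia.
Qed.

Lemma overloaded_fixpoint v : 2 * Kdeg v <= s v -> step s = s.
Proof.
move=> over.
have nbrs_fire y : (forall t, fires (Uiter t s) y) ->
    forall z, Kadj y z -> forall t, fires (Uiter t s) z.
  by move=> fire_y z yz t; move/eqP/inflow_fullP: (fires_forever_inflow fire_y t); apply.
have [w vw vw_cover] : exists2 w, Kadj v w & forall z, Kadj v z || Kadj w z.
  case: v {over} => [i|j]; last by exists (inl (Ordinal a_gt0)) => // -[].
  by exists (inr (Ordinal b_gt0)) => // -[].
have all_fire z t : fires (Uiter t s) z.
  have fire_v := overloaded_fires over.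
  case/orP: (vw_cover z) => [vz | wz]; first exact: nbrs_fire _ fire_v z vz t.
  exact: nbrs_fire _ (nbrs_fire _ fire_v w vw) z wz t.
apply: functional_extensionality => z.
rewrite stepE (all_fire z 0) (fires_forever_inflow (all_fire z) 0).
by have := all_fire z 0; rewrite /fires /=; lia.
Qed.

End Overloaded.

Lemma eventual_period_Uiter a b (s : position a b) T q :
  is_eventual_period (Uiter T s) q -> is_eventual_period s q.
Proof.
case=> q_gt0 [T' per]; split => //; exists (T' + T) => t le_t.
by have := per (t - T); rewrite /Uiter -!iterD addnAC subnK; [apply; lia | lia].
Qed.

Lemma period_dvdn a b (s : position a b) p q :
  period_of s p -> is_eventual_period s q -> p %| q.
Proof.
move=> [[p_gt0 [T per_p]] p_min] [q_gt0 [T' per_q]].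
have per_kp k t : T <= t -> Uiter (t + k * p) s = Uiter t s.
  elim: k t => [|k IH] t le_t; first by rewrite mul0n addn0.
  by rewrite mulSn addnCA addnC per_p ?IH //; lia.
rewrite /dvdn; apply: contraT => rem_ne0.
suff: p <= q %% p by rewrite leqNgt ltn_pmod.
apply: p_min; split; first by rewrite lt0n.
exists (maxn T T') => t; rewrite geq_max => /andP [le_T le_T'].
rewrite -(per_kp (q %/ p)); last by lia.
by rewrite -addnA [q %% p + _]addnC -divn_eq per_q.
Qed.

Lemma small_even_eventual_periods a b (s : position a b) p :
  0 < a -> 0 < b -> is_eventual_period s p ->
  (exists m, 0 < m <= a /\ is_eventual_period s (2 * m)) /\
  (exists m, 0 < m <= b /\ is_eventual_period s (2 * m)).
Proof.
move=> a_gt0 b_gt0 [p_gt0 [T per]].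
suff [[m [m_le per_m]] [m' [m'_le per_m']]] :
    (exists m, 0 < m <= a /\ is_eventual_period (Uiter T s) (2 * m)) /\
    (exists m, 0 < m <= b /\ is_eventual_period (Uiter T s) (2 * m)).
  by split; [exists m | exists m']; split => //; apply: (eventual_period_Uiter (T := T)).
have s_periodic : Uiter p (Uiter T s) = Uiter T s.
  by rewrite /Uiter -iterD addnC; apply: per.
case: (boolP [exists v, 2 * Kdeg v <= Uiter T s v]) => [/existsP [v over] |
    /existsPn under].
- have fixed := overloaded_fixpoint a_gt0 b_gt0 p_gt0 s_periodic over.
  have per2 : is_eventual_period (Uiter T s) (2 * 1).
    by split => //; exists 0 => t _; rewrite /Uiter !(iter_fix _ fixed).
  by split; exists 1; split.
- by apply: underloaded_eventual_periods => // v; rewrite ltnNge under.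
Qed.

Theorem corollary3p6 (a b : nat) (ha : 1 <= a) (hb : 1 <= b)
  (s : position a b) (p : nat) :
  period_of s p ->
  (odd p -> p <= minn a b) /\ (~~ odd p -> p <= 2 * minn a b).
Proof.
move=> per_p; have [ev_p _] := per_p.
have [[m [/andP [m_gt0 m_le] per_m]] [m' [/andP [m'_gt0 m'_le] per_m']]] :=
  small_even_eventual_periods ha hb ev_p.
have dvd_m := period_dvdn per_p per_m; have dvd_m' := period_dvdn per_p per_m'.
split => [p_odd | _].
- have p_coprime2 : coprime p 2 by rewrite coprimen2.
  rewrite (Gauss_dvdr _ p_coprime2) in dvd_m.
  rewrite (Gauss_dvdr _ p_coprime2) in dvd_m'.
  by have := dvdn_leq m_gt0 dvd_m; have := dvdn_leq m'_gt0 dvd_m'; lia.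
- have := dvdn_leq (leq_mul (isT : 0 < 2) m_gt0) dvd_m.
  by have := dvdn_leq (leq_mul (isT : 0 < 2) m'_gt0) dvd_m'; lia.
Qed.
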